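(* Let $\Sigma_1,\Sigma_2$ be systems as in the context and let $\mathcal R=\ker([R_1\ \ -R_2])\subseteq\mathbb R^{n_1}\times\mathbb R^{n_2}$ (with $R_i\in\mathbb R^{r\times n_i}$) be a total stochastic bisimulation relation between $\Sigma_1$ and $\Sigma_2$. Then for every $(x_1^0,x_2^0)\in\mathcal R$, every input $\mathbf u$ and every $t\ge0$, the random vectors $R_1\mathbf x_1|_{x_1^0,\mathbf u}(t)$ and $R_2\mathbf x_2|_{x_2^0,\mathbf u}(t)$ have the same probability distribution.
   Context: For $i=1,2$, $\Sigma_i$ is the system $x_i(t+1)=A_ix_i(t)+B_iu(t)+G_iw_i(t)$, $y_i(t)=C_ix_i(t)+\nu_i(t)$, $t\in\mathbb{N}$, with $x_i\in\mathbb{R}^{n_i}$, $u\in\mathbb{R}^m$, $w_i\in\mathbb{R}^{l_i}$, $y_i,\nu_i\in\mathbb{R}^p$, where $(w_i(t))_t$ is i.i.d. with $w_i(t)\sim\mathcal N(\mu_i,I_{l_i})$, $(\nu_i(t))_t$ is i.i.d. with $\nu_i(t)\sim\mathcal N(0,\Psi_i)$, and the two sequences are mutually independent. For a deterministic initial state $x_i^0$ and deterministic input $\mathbf u:\mathbb N\to\mathbb R^m$, $\mathbf x_i|_{x_i^0,\mathbf u}(t)=A_i^tx_i^0+\sum_{\tau=0}^{t-1}A_i^{t-1-\tau}(B_iu(\tau)+G_iw_i(\tau))$, $\mathbf y_i|_{x_i^0,\mathbf u}(t)=C_i\mathbf x_i|_{x_i^0,\mathbf u}(t)+\nu_i(t)$;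 $\mathbf P(\cdot\mid x_i^0)$ is probability for the process started at $x_i^0$. Processes are stochastically equivalent ($\sim$) if all finite-dimensional joint distributions coincide. $\mathrm{supp}(v)=\{z:\mathbf P(v\in B_\rho(z))>0\ \forall\rho>0\}$. For a relation $\mathcal R$: $\mathcal R(X_1)=\{x_2:\exists x_1\in X_1,(x_1,x_2)\in\mathcal R\}$, $\mathcal R^{-1}(X_2)=\{x_1:\exists x_2\in X_2,(x_1,x_2)\in\mathcal R\}$; total means $\mathcal R(\mathbb R^{n_1})=\mathbb R^{n_2}$ and $\mathcal R^{-1}(\mathbb R^{n_2})=\mathbb R^{n_1}$. A subspace $\mathcal R\subseteq\mathbb R^{n_1}\times\mathbb R^{n_2}$ is a stochastic bisimulation relation between $\Sigma_1,\Sigma_2$ if for every $(x_1^0,x_2^0)\in\mathcal R$, every input $\mathbf u$ and every $t\in\mathbb N$: (i) for every measurable $X_1\subseteq\mathcal R^{-1}(\mathbb R^{n_2})$, $\mathbf P(\mathbf x_1|_{x_1^0,\mathbf u}(t)\in X_1\mid x_1^0)=\mathbf P(\mathbf x_2|_{x_2^0,\mathbf u}(t)\in\mathcal R(X_1\cap\mathrm{supp}(\mathbf x_1|_{x_1^0,\mathbf u}(t)))\mid x_2^0)$; (ii) for every measurable $X_2\subseteq\mathcal R(\mathbb R^{n_1})$, $\mathbf P(\mathbf x_2|_{x_2^0,\mathbf u}(t)\in X_2\mid x_2^0)=\mathbf P(\mathbf x_1|_{x_1^0,\mathbf u}(t)\in\mathcal R^{-1}(X_2\cap\mathrm{supp}(\mathbf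 x_2|_{x_2^0,\mathbf u}(t)))\mid x_1^0)$; (iii) $\mathbf y_1|_{x_1^0,\mathbf u}\sim\mathbf y_2|_{x_2^0,\mathbf u}$. *)

From HB Require Import structures.
From mathcomp Require Import all_boot all_order all_algebra.
From mathcomp Require Import all_classical all_reals all_analysis.

Set Implicit Arguments.
Unset Strict Implicit.
Unset Printing Implicit Defensive.

Import Order.TTheory GRing.Theory Num.Theory.
Local Open Scope classical_set_scope.
Local Open Scope ring_scope.

Section Defs.
Variable R : realType.

Definition sqdist (a b : nat) (x z : 'M[R]_(a, b)) : R :=
  \sum_(i < a) \sum_(j < b) (x i j - z i j) ^+ 2.

Definition eball (a b : nat) (z : 'M[R]_(a, b)) (rho : R) : set 'M[R]_(a, b) :=
  [set x | sqdist x z < rho ^+ 2].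

Definition eopen (a b : nat) (U : set 'M[R]_(a, b)) : Prop :=
  forall x, U x -> exists2 rho : R, 0 < rho & eball x rho `<=` U.

Definition borel (a b : nat) : set (set 'M[R]_(a, b)) := <<s @eopen a b >>.

Context {d : measure_display} {T : measurableType d}.

Definition rvec (a b : nat) (X : T -> 'M[R]_(a, b)) : Prop :=
  forall B, borel B -> measurable (X @^-1` B).

Definition prob (P : probability T R) (a b : nat) (X : T -> 'M[R]_(a, b))
    (S : set 'M[R]_(a, b)) : \bar R := P (X @^-1` S).

Definition supp (P : probability T R) (a b : nat) (X : T -> 'M[R]_(a, b))
    : set 'M[R]_(a, b) :=
  [set z | forall rho : R, 0 < rho -> (0 < prob P X (eball z rho))%E].

Definition dotv (n : nat) (a x : 'cV[R]_n) : R := (a^T *m x) 0 0.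

(* X ~ N(mu, Sig): Gaussian random vector, defined (degenerate covariances
   allowed) through its characteristic function
   E[exp(i a.X)] = exp(i a.mu - a.Sig a / 2), split in real/imaginary parts *)
Definition gaussian (P : probability T R) (n : nat) (X : T -> 'cV[R]_n)
    (mu : 'cV[R]_n) (Sig : 'M[R]_n) : Prop :=
  rvec X /\
  forall a : 'cV[R]_n,
    (\int[P]_w (cos (dotv a (X w)))%:E =
       (expR (- (dotv a (Sig *m a)) / 2) * cos (dotv a mu))%:E)%E /\
    (\int[P]_w (sin (dotv a (X w)))%:E =
       (expR (- (dotv a (Sig *m a)) / 2) * sin (dotv a mu))%:E)%E.

(* N(0, Psi), and the whole family
   {w(t), nu(t) : t} mutually independent (product rule on every finite
   subfamily; unconstrained members are given the whole space). *)
Definition noise_model (P : probability T R) (l p : nat)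
    (mu : 'cV[R]_l) (Psi : 'M[R]_p)
    (w : nat -> T -> 'cV[R]_l) (nu : nat -> T -> 'cV[R]_p) : Prop :=
  (forall t, gaussian P (w t) mu 1%:M) /\
  (forall t, gaussian P (nu t) 0 Psi) /\
  (forall (N : nat) (Bw : nat -> set 'cV[R]_l) (Bn : nat -> set 'cV[R]_p),
     (forall t, borel (Bw t)) -> (forall t, borel (Bn t)) ->
     P (\bigcap_(t in [set k | (k < N)%N]) (w t @^-1` Bw t `&` nu t @^-1` Bn t))
     = (\prod_(t < N) (P (w t @^-1` Bw t) * P (nu t @^-1` Bn t)))%E).

End Defs.

(* Sigma : x(t+1) = A x(t) + B u(t) + G w(t),  y(t) = C x(t) + nu(t),
   realised on a probability space (T, P) with noise processes w, nu. *)
Record lsys (R : realType) (n m l p : nat) := Lsys {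
  sA : 'M[R]_n; sB : 'M[R]_(n, m); sG : 'M[R]_(n, l); sC : 'M[R]_(p, n);
  smu : 'cV[R]_l; sPsi : 'M[R]_p }.

Section Traj.
Variables (R : realType) (n m l p : nat) (S : lsys R n m l p).
Context {T : Type}.

Definition xtraj (w : nat -> T -> 'cV[R]_l) (x0 : 'cV[R]_n)
    (u : nat -> 'cV[R]_m) (t : nat) (om : T) : 'cV[R]_n :=
  (sA S) ^+ t *m x0 +
  \sum_(tau < t) (sA S) ^+ (t - 1 - tau) *m (sB S *m u tau + sG S *m w tau om).

Definition ytraj (w : nat -> T -> 'cV[R]_l) (nu : nat -> T -> 'cV[R]_p)
    (x0 : 'cV[R]_n) (u : nat -> 'cV[R]_m) (t : nat) (om : T) : 'cV[R]_p :=
  sC S *m xtraj w x0 u t om + nu t om.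
End Traj.

Definition stoch_equiv (R : realType) (p : nat)
    {d1 : measure_display} {T1 : measurableType d1} (P1 : probability T1 R)
    {d2 : measure_display} {T2 : measurableType d2} (P2 : probability T2 R)
    (y1 : nat -> T1 -> 'cV[R]_p) (y2 : nat -> T2 -> 'cV[R]_p) : Prop :=
  forall (N : nat) (ts : 'I_N -> nat) (B : set 'M[R]_(p, N)),
    borel B ->
    prob P1 (fun om => \matrix_(i < p, k < N) y1 (ts k) om i 0) B =
    prob P2 (fun om => \matrix_(i < p, k < N) y2 (ts k) om i 0) B.

Definition rel_img {X Y : Type} (Rel : set (X * Y)) (A : set X) : set Y :=
  [set y | exists2 x, A x & Rel (x, y)].
Definition rel_preimg {X Y : Type} (Rel : set (X * Y)) (B : set Y) : set X :=
  [set x | exists2 y, B y & Rel (x, y)].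

Definition total_rel {X Y : Type} (Rel : set (X * Y)) : Prop :=
  rel_img Rel setT = setT /\ rel_preimg Rel setT = setT.

Definition subspace_rel (R : realType) (n1 n2 : nat)
    (Rel : set ('cV[R]_n1 * 'cV[R]_n2)) : Prop :=
  Rel (0, 0) /\
  (forall (a : R) x1 x2 y1 y2, Rel (x1, x2) -> Rel (y1, y2) ->
     Rel (a *: x1 + y1, a *: x2 + y2)).

Definition stoch_bisim (R : realType) (n1 n2 m l1 l2 p : nat)
    (S1 : lsys R n1 m l1 p) (S2 : lsys R n2 m l2 p)
    {d1 : measure_display} {T1 : measurableType d1} (P1 : probability T1 R)
    (w1 : nat -> T1 -> 'cV[R]_l1) (nu1 : nat -> T1 -> 'cV[R]_p)
    {d2 : measure_display} {T2 : measurableType d2} (P2 : probability T2 R)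
    (w2 : nat -> T2 -> 'cV[R]_l2) (nu2 : nat -> T2 -> 'cV[R]_p)
    (Rel : set ('cV[R]_n1 * 'cV[R]_n2)) : Prop :=
  subspace_rel Rel /\
  forall x10 x20, Rel (x10, x20) -> forall (u : nat -> 'cV[R]_m),
    (forall t : nat,
      (forall X1 : set 'cV[R]_n1, borel X1 -> X1 `<=` rel_preimg Rel setT ->
         prob P1 (xtraj S1 w1 x10 u t) X1 =
         prob P2 (xtraj S2 w2 x20 u t)
           (rel_img Rel (X1 `&` supp P1 (xtraj S1 w1 x10 u t)))) /\
      (forall X2 : set 'cV[R]_n2, borel X2 -> X2 `<=` rel_img Rel setT ->
         prob P2 (xtraj S2 w2 x20 u t) X2 =
         prob P1 (xtraj S1 w1 x10 u t)
           (rel_preimg Rel (X2 `&` supp P2 (xtraj S2 w2 x20 u t))))) /\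
    stoch_equiv P1 P2 (ytraj S1 w1 nu1 x10 u) (ytraj S2 w2 nu2 x20 u).

Definition ker_rel (R : realType) (r n1 n2 : nat)
    (R1 : 'M[R]_(r, n1)) (R2 : 'M[R]_(r, n2)) : set ('cV[R]_n1 * 'cV[R]_n2) :=
  [set xx | R1 *m xx.1 - R2 *m xx.2 = 0].

(* Let x_i be the state of Sigma_i at time t. As the relation is total, clause
   (i) of the bisimulation applies to the Borel set {x | R_1 x \in B}; the
   relation maps its intersection with supp(x_1) onto
   {x | R_2 x \in B /\ R_1(supp x_1)}, a subset of {x | R_2 x \in B}. Hence
   P(R_1 x_1 \in B) <= P(R_2 x_2 \in B), and clause (ii) gives the reverse
   inequality. The real work is measurability: the support is closed, and a
   linear image of a closed set is a countable union of compact sets, hence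
   Borel. *)

From HB Require Import structures.
From mathcomp Require Import all_boot all_order all_algebra.
From mathcomp Require Import all_classical all_reals all_analysis.
From mathcomp Require Import measurable_realfun ring lra.
Import Order.TTheory GRing.Theory Num.Theory.
Import numFieldTopology.Exports numFieldNormedType.Exports.
Local Open Scope classical_set_scope.
Local Open Scope ring_scope.

Local Notation borel_space R a b := (g_sigma_algebraType (@eopen R a b)).

Section EuclideanTopology.
Context {R : realType} {a b : nat}.
Implicit Types (x y z : 'M[R]_(a, b)) (e rho : R).

Lemma sqdistC x z : sqdist x z = sqdist z x.
Proof.
by apply: eq_bigr => i _; apply: eq_bigr => j _; rewrite -sqrrN opprB.
Qed.

Lemma sqr_entry_le_sqdist x z i j : (x i j - z i j) ^+ 2 <= sqdist x z.
Proof.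
rewrite /sqdist (bigD1 i) //= (bigD1 j) //= -addrA lerDl.
apply: addr_ge0; first by apply: sumr_ge0 => k _; exact: sqr_ge0.
by apply: sumr_ge0 => k _; apply: sumr_ge0 => l _; exact: sqr_ge0.
Qed.

Lemma sqdist_le_split x y z : sqdist x z <= 2 * sqdist x y + 2 * sqdist y z.
Proof.
rewrite /sqdist !mulr_sumr -big_split /=; apply: ler_sum => i _.
rewrite !mulr_sumr -big_split /=; apply: ler_sum => j _.
have := sqr_ge0 (x i j - y i j - (y i j - z i j)); nra.
Qed.

Lemma eball_sub x z e rho :
  0 < e -> e *+ 2 <= rho -> eball x e z -> eball z e `<=` eball x rho.
Proof.
rewrite /eball /= => e_gt0 e_rho zx y yz.
apply: le_lt_trans (sqdist_le_split y z x) _.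
apply: (@lt_le_trans _ _ ((e *+ 2) ^+ 2)); last by rewrite ler_pXn2r // ?nnegrE; lra.
have -> : (e *+ 2) ^+ 2 = 2 * e ^+ 2 + 2 * e ^+ 2 by rewrite -mulr_natr; ring.
by apply: ltrD; rewrite ltr_pM2l.
Qed.

Lemma ball_mxE x e y : ball x e y <-> 0 < e /\ forall i j, `|x i j - y i j| < e.
Proof.
by split => -[e_gt0 xy]; split => // i j; have := xy i j; rewrite -ball_normE.
Qed.

Lemma eball_sub_ball x rho : 0 < rho -> eball x rho `<=` ball x rho.
Proof.
move=> rho_gt0 y xy; apply/ball_mxE; split => // i j.
have := le_lt_trans (sqr_entry_le_sqdist y x i j) xy.
rewrite distrC; move: (y i j - x i j) => d d_lt.
by rewrite ltr_norml; apply/andP; split; nra.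
Qed.

Lemma ball_sub_eball x rho : 0 < rho -> exists2 d, 0 < d & ball x d `<=` eball x rho.
Proof.
move=> rho_gt0; pose N : R := (a * b)%:R.
have N_ge0 : 0 <= N by rewrite ler0n.
pose d := rho / (N + 1).
have d_gt0 : 0 < d by apply: divr_gt0 => //; lra.
have rhoE : rho = d * (N + 1) by rewrite divfK //; lra.
exists d => // y /ball_mxE[_ xy]; rewrite /eball /=.
apply: (@le_lt_trans _ _ (\sum_(i < a) \sum_(j < b) d ^+ 2)).
  apply: ler_sum => i _; apply: ler_sum => j _.
  have := xy i j; rewrite distrC; move: (y i j - x i j) => t.
  by rewrite ltr_norml => /andP[? ?]; nra.
rewrite !sumr_const !card_ord -mulrnA mulnC -mulr_natl -/N rhoE; nra.
Qed.

Lemma eopenE : @eopen R a b = open.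
Proof.
apply/funext => U; apply/propext; rewrite openE; split => Uopen x /Uopen.
- move=> [rho rho_gt0 rhoU]; apply/nbhs_ballP.
  have [d d_gt0 dsub] := ball_sub_eball x rho rho_gt0.
  by exists d => //; exact: subset_trans dsub rhoU.
- move=> /nbhs_ballP[e /= e_gt0 eU]; exists e => //.
  exact: subset_trans (eball_sub_ball x e e_gt0) eU.
Qed.

Lemma rat_mx_approx x e : 0 < e -> exists q : 'M[rat]_(a, b), eball x e (map_mx ratr q).
Proof.
move=> e_gt0; have [d d_gt0 dsub] := ball_sub_eball x e e_gt0.
have near_rat (ij : 'I_a * 'I_b) : exists q : rat, `|x ij.1 ij.2 - ratr q| < d.
  have [|q] := @rat_in_itvoo R (x ij.1 ij.2 - d) (x ij.1 ij.2 + d); first lra.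
  by rewrite in_itv /= => ?; exists q; rewrite ltr_distlC.
have [q qx] := choice near_rat.
exists (\matrix_(i, j) q (i, j)); apply: dsub; apply/ball_mxE; split => // i j.
by rewrite !mxE; exact: qx (i, j).
Qed.

Definition rat_eball (c : 'M[rat]_(a, b) * nat) : set 'M[R]_(a, b) :=
  eball (map_mx ratr c.1) c.2.+1%:R^-1.

Lemma eopen_bigcup_rat_eball U :
  eopen U -> U = \bigcup_(c in [set c | rat_eball c `<=` U]) rat_eball c.
Proof.
move=> Uopen; apply/seteqP; split=> [x Ux | x [c cU /cU //]].
have [rho rho_gt0 rhoU] := Uopen _ Ux.
have [k] := @ltr_add_invr R 0 (rho / 2) ltac:(lra); rewrite add0r.
set e := k.+1%:R^-1 => e_rho.
have e_gt0 : 0 < e by rewrite invr_gt0 ltr0n.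
have [q xq] := rat_mx_approx x e e_gt0.
exists (q, k); last by rewrite /rat_eball /eball /= sqdistC.
apply: subset_trans rhoU; apply: eball_sub => //=; rewrite -/e mulr2n; lra.
Qed.

End EuclideanTopology.

Section RandomVectors.
Context {R : realType}.

Lemma borel_open a b (U : set 'M[R]_(a, b)) : open U -> borel U.
Proof. by rewrite -eopenE; exact: sub_sigma_algebra. Qed.

Lemma borel_closed a b (C : set 'M[R]_(a, b)) : closed C -> borel C.
Proof.
move=> Cclosed; rewrite -[C]setCK; apply: (@measurableC _ (borel_space R a b)).
by apply: borel_open; rewrite openC.
Qed.

Lemma measurable_coord a b i j : measurable_fun setT (fun x : borel_space R a b => x i j).
Proof.
apply: measurability; first exact: RGenOpens.measurableE.
move=> _ [_ [x [y ->]] <-].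
rewrite setTI; apply: borel_open; apply: open_comp; last exact: interval_open.
by move=> M _; exact: coord_continuous.
Qed.

Context {d : measure_display} {T : measurableType d}.

Lemma rvec_measurable_fun a b (X : T -> 'M[R]_(a, b)) :
  rvec X <-> measurable_fun setT (X : T -> borel_space R a b).
Proof.
split=> [mX _ B mB | mX B mB]; first by rewrite setTI; exact: mX.
by rewrite -[X @^-1` B]setTI; exact: mX.
Qed.

Lemma measurable_preimage_eball a b (X : T -> 'M[R]_(a, b)) z rho :
  (forall i j, measurable_fun setT (fun om => X om i j)) ->
  measurable (X @^-1` eball z rho).
Proof.
move=> mX; rewrite -[_ @^-1` _]setTI.
have -> : X @^-1` eball z rho = (fun om => sqdist (X om) z) @^-1` `]-oo, rho ^+ 2[.
  by apply/seteqP; split => om; rewrite /= in_itv.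
have msqdist : measurable_fun setT (fun om => sqdist (X om) z).
  apply: measurable_sum => i; apply: measurable_sum => j.
  by apply: measurable_funX; apply: measurable_funB => //; exact: measurable_cst.
exact: msqdist (measurable_itv _).
Qed.

Lemma rvecP a b (X : T -> 'M[R]_(a, b)) :
  rvec X <-> forall i j, measurable_fun setT (fun om => X om i j).
Proof.
split=> [/rvec_measurable_fun mX i j | mX].
  exact: measurableT_comp (@measurable_coord a b i j) mX.
apply/rvec_measurable_fun; apply: measurability; first reflexivity.
move=> _ [U Uopen <-].
rewrite setTI (eopen_bigcup_rat_eball _ Uopen) preimage_bigcup bigcup_mkcond.
apply: countable_bigcupT_measurable; first exact: countableP.
by move=> c; case: ifP => _; [exact: measurable_preimage_eball | exact: measurable0].
Qed.

Lemma rvec_cst a b (c : 'M[R]_(a, b)) : rvec (fun _ : T => c).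
Proof. by apply/rvecP => i j; exact: measurable_cst. Qed.

Lemma rvecD a b (X Y : T -> 'M[R]_(a, b)) :
  rvec X -> rvec Y -> rvec (fun om => X om + Y om).
Proof.
move=> /rvecP mX /rvecP mY; apply/rvecP => i j.
under eq_fun do rewrite mxE.
exact: measurable_funD.
Qed.

Lemma rvec_sum a b (X : nat -> T -> 'M[R]_(a, b)) t :
  (forall tau, rvec (X tau)) -> rvec (fun om => \sum_(tau < t) X tau om).
Proof.
move=> mX; apply/rvecP => i j.
under eq_fun do rewrite summxE.
by apply: measurable_sum => tau; move/rvecP: (mX tau); apply.
Qed.

Lemma rvec_mulmx a b c (A : 'M[R]_(c, a)) (X : T -> 'M[R]_(a, b)) :
  rvec X -> rvec (fun om => A *m X om).
Proof.
move=> /rvecP mX; apply/rvecP => i j.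
under eq_fun do rewrite mxE.
apply: measurable_sum => k.
exact: measurable_funM (measurable_cst _) (mX k j).
Qed.

Lemma rvec_xtraj n m l p (S : lsys R n m l p) (w : nat -> T -> 'cV[R]_l) x0 u t :
  (forall tau, rvec (w tau)) -> rvec (xtraj S w x0 u t).
Proof.
move=> mw; apply: rvecD; first exact: rvec_cst.
apply: (@rvec_sum _ _
  (fun tau om => sA S ^+ (t - 1 - tau) *m (sB S *m u tau + sG S *m w tau om))) => tau.
by apply: rvec_mulmx; apply: rvecD; [exact: rvec_cst | exact: rvec_mulmx].
Qed.

End RandomVectors.

Lemma borel_preimage_mulmx (R : realType) a b c (A : 'M[R]_(c, a))
    (B : set 'M[R]_(c, b)) :
  borel B -> borel [set x | B (A *m x)].
Proof.
exact: (@rvec_mulmx _ _ (borel_space R a b) _ _ _ A id).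
Qed.

Lemma closed_supp (R : realType) (d : measure_display) (T : measurableType d)
    (P : probability T R) a b (X : T -> 'M[R]_(a, b)) :
  rvec X -> closed (supp P X).
Proof.
move=> /rvecP mX; rewrite -openC -eopenE => z /= zNsupp.
have [rho [rho_gt0 null]] : exists rho, 0 < rho /\ ~ (0 < prob P X (eball z rho))%E.
  apply: contrapT => h; apply: zNsupp => rho rho_gt0.
  by apply: contrapT => ?; apply: h; exists rho.
have rho2_gt0 : 0 < rho / 2 by lra.
exists (rho / 2) => // z' zz' z'supp; apply: null.
apply: lt_le_trans (z'supp _ rho2_gt0) _.
apply: le_measure; rewrite ?inE; try exact: measurable_preimage_eball.
by apply: preimage_subset; apply: eball_sub => //; rewrite mulr2n; lra.
Qed.

Section ClosedImage.
Context {R : realType}.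

Lemma continuous_mx_entries (U : topologicalType) a b (f : U -> 'M[R]_(a, b)) :
  (forall i j, continuous (fun x => f x i j)) -> continuous f.
Proof.
move=> fcont x; apply/cvg_ballP => e e_gt0.
have : \forall y \near x, forall ij : 'I_a * 'I_b, ball (f x ij.1 ij.2) e (f y ij.1 ij.2).
  by apply: filter_forall => ij; move/cvg_ballP: (fcont ij.1 ij.2 x); apply.
by apply: filterS => y fxy; split => // i j; exact: (fxy (i, j)).
Qed.

Lemma continuous_mulmx {a b c} (A : 'M[R]_(c, a)) :
  continuous (fun x : 'M[R]_(a, b) => A *m x).
Proof.
apply: continuous_mx_entries => i j.
under eq_fun do rewrite mxE.
apply: continuous_big => [|k _]; first exact: add_continuous.
by move=> x; apply: continuousM; [exact: cst_continuous | exact: coord_continuous].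
Qed.

Lemma continuous_trmx {a b} : continuous (fun x : 'M[R]_(a, b) => x^T).
Proof.
apply: continuous_mx_entries => i j.
under eq_fun do rewrite mxE.
exact: coord_continuous.
Qed.

Lemma borel_mulmx_closed n r (L : 'M[R]_(r, n)) (C : set 'cV[R]_n) :
  closed C -> borel [set L *m x | x in C].
Proof.
(* A linear image of a closed set need not be closed, but it is sigma-compact.
   Compactness of bounded closed sets is only available for row vectors. *)
move=> Cclosed.
pose K (k : nat) := [set v : 'rV[R]_n | C v^T /\ `|v| <= k%:R].
have -> : [set L *m x | x in C] = \bigcup_k [set L *m v^T | v in K k].
  apply/seteqP; split => [_ [x Cx <-] | _ [k _ [v [Cv _] <-]]]; last by exists v^T.
  exists (Num.bound `|x^T|) => //; exists x^T; last by rewrite trmxK.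
  by split; [rewrite trmxK | apply/ltW/archi_boundP].
apply: (@bigcupT_measurable _ (borel_space R r 1)) => k.
apply: borel_closed; apply: compact_closed; first exact: norm_hausdorff.
apply: continuous_compact.
  apply: continuous_subspaceT => v.
  exact: continuous_comp (continuous_trmx v) (continuous_mulmx L v^T).
apply: bounded_closed_compact.
  rewrite /= /bounded_near; near=> M => v [_ vk] /=; apply: le_trans vk _.
  by near: M; apply: nbhs_pinfty_ge; exact: num_real.
apply: closedI; first exact: (continuous_closedP _).1 continuous_trmx _ Cclosed.
exact: (continuous_closedP _).1 (@norm_continuous _ 'rV[R]_n) _ (@closed_le R k%:R).
Unshelve. all: by end_near.
Qed.

End ClosedImage.

Section KernelRelation.
Context {R : realType} {r n1 n2 : nat} (R1 : 'M[R]_(r, n1)) (R2 : 'M[R]_(r, n2)).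

Lemma ker_relE x1 x2 : ker_rel R1 R2 (x1, x2) <-> R1 *m x1 = R2 *m x2.
Proof.
by rewrite /ker_rel /=; split => [/eqP | ->]; rewrite ?subrr // subr_eq0 => /eqP.
Qed.

Lemma rel_img_ker_rel (B : set 'cV[R]_r) (C : set 'cV[R]_n1) :
  rel_img (ker_rel R1 R2) ([set x | B (R1 *m x)] `&` C) =
  [set x | (B `&` [set R1 *m y | y in C]) (R2 *m x)].
Proof.
apply/seteqP; split => x2 /=.
  by move=> [x1 [Bx1 Cx1] /ker_relE x12]; rewrite -x12; split => //; exists x1.
by move=> [Bx2 [x1 Cx1 x12]]; exists x1; [split => //=; rewrite x12 | exact/ker_relE].
Qed.

Lemma rel_preimg_ker_rel : rel_preimg (ker_rel R1 R2) = rel_img (ker_rel R2 R1).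
Proof.
apply/funext => Y; apply/seteqP.
by split => x1 [x2 Yx2 x12]; exists x2 => //; rewrite /ker_rel /= -opprB x12 oppr0.
Qed.

Lemma prob_mulmx_le_of_rel_img (d1 : measure_display) (T1 : measurableType d1)
    (P1 : probability T1 R) (d2 : measure_display) (T2 : measurableType d2)
    (P2 : probability T2 R) (X1 : T1 -> 'cV[R]_n1) (X2 : T2 -> 'cV[R]_n2)
    (B : set 'cV[R]_r) :
  rvec X1 -> rvec X2 -> borel B ->
  prob P1 X1 [set x | B (R1 *m x)] =
    prob P2 X2 (rel_img (ker_rel R1 R2) ([set x | B (R1 *m x)] `&` supp P1 X1)) ->
  (prob P1 (fun om => R1 *m X1 om) B <= prob P2 (fun om => R2 *m X2 om) B)%E.
Proof.
move=> mX1 mX2 mB transfer.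
rewrite [X in (X <= _)%E]transfer rel_img_ker_rel /prob.
apply: le_measure; rewrite ?inE; last by move=> om [].
- apply: mX2; apply: borel_preimage_mulmx.
  apply: (@measurableI _ (borel_space R r 1)) => //.
  by apply: borel_mulmx_closed; apply: closed_supp.
- by apply: (mX2 [set x | B (R2 *m x)]); apply: borel_preimage_mulmx.
Qed.

End KernelRelation.

Theorem lemma2 (R : realType) (n1 n2 m l1 l2 p r : nat)
    (S1 : lsys R n1 m l1 p) (S2 : lsys R n2 m l2 p)
    (d1 : measure_display) (T1 : measurableType d1) (P1 : probability T1 R)
    (w1 : nat -> T1 -> 'cV[R]_l1) (nu1 : nat -> T1 -> 'cV[R]_p)
    (d2 : measure_display) (T2 : measurableType d2) (P2 : probability T2 R)
    (w2 : nat -> T2 -> 'cV[R]_l2) (nu2 : nat -> T2 -> 'cV[R]_p)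
    (R1 : 'M[R]_(r, n1)) (R2 : 'M[R]_(r, n2)) :
  noise_model P1 (smu S1) (sPsi S1) w1 nu1 ->
  noise_model P2 (smu S2) (sPsi S2) w2 nu2 ->
  total_rel (ker_rel R1 R2) ->
  stoch_bisim S1 S2 P1 w1 nu1 P2 w2 nu2 (ker_rel R1 R2) ->
  forall (x10 : 'cV[R]_n1) (x20 : 'cV[R]_n2), ker_rel R1 R2 (x10, x20) ->
  forall (u : nat -> 'cV[R]_m) (t : nat) (B : set 'cV[R]_r), borel B ->
    prob P1 (fun om => R1 *m xtraj S1 w1 x10 u t om) B =
    prob P2 (fun om => R2 *m xtraj S2 w2 x20 u t om) B.
Proof.
move=> [noise1 _] [noise2 _] [img_setT preimg_setT] [_ bisim] x10 x20 x_rel u t B mB.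
have [/(_ t)[fwd bwd] _] := bisim x10 x20 x_rel u.
have mX1 : rvec (xtraj S1 w1 x10 u t) by apply: rvec_xtraj => tau; exact: (noise1 tau).1.
have mX2 : rvec (xtraj S2 w2 x20 u t) by apply: rvec_xtraj => tau; exact: (noise2 tau).1.
apply/le_anti/andP; split; apply: prob_mulmx_le_of_rel_img => //.
- by apply: fwd; [exact: borel_preimage_mulmx | rewrite preimg_setT].
- rewrite -rel_preimg_ker_rel.
  by apply: bwd; [exact: borel_preimage_mulmx | rewrite img_setT].
Qed.
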